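(* Let $n,m,k$ be positive integers with $k\mid n$, let $p\in(0,1/2)$, and let $\mu_1,\dots,\mu_k\in\{0,1\}^m$ be fixed ground-truth mindsets. Let $V=V_1\sqcup\dots\sqcup V_k$ be a population with $|V_i|=n/k$, where every person $v\in V_i$ answers question $s\in\{1,\dots,m\}$ with $v(s)=\mu_i(s)$ with probability $1-p$ and $v(s)=1-\mu_i(s)$ with probability $p$, independently across persons and questions. Let $\mathcal P$ be the set of $m$ cuts $\{A_s^0,A_s^1\}$, $s=1,\dots,m$, where $A_s^y=\{v\in V: v(s)=y\}$. Let $a\in\mathbb N$ be the agreement parameter, and assume $p<1/(k+3)$ and $a\in\bigl(pn,\,(1-3p)n/k\bigr)$. Then: (1) The probability that at least one of the mindsets $\mu_i$ does not induce a $\mathcal P$-tangle is at most $k\,m\,\exp\!\bigl(-2n(ka/n-1+3p)^2/(9k)\bigr)$. (2) If the mindsets $\mu_1,\dots,\mu_k$ satisfy the non-degeneracy assumption, then the probability that there exists a $\mathcal P$-tangle which is not equal to any of $\mu_1,\dots,\mu_k$ is at most $k\,m\,\exp\!\bigl(-2n(a/n-p)^2/k\bigr)$. Both probabilities are over the random answers of the persons (the mindsets being fixed).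
   Context: An orientation of $\mathcal P$ chooses one side of every cut; it is identified with a vector $\tau\in\{0,1\}^m$ by choosing the side $A_s^{\tau(s)}$ of the cut for question $s$. For the agreement parameter $a$, an orientation $O$ is a $\mathcal P$-tangle (is consistent) if for all (not necessarily distinct) chosen sides $A,B,C\in O$ we have $|A\cap B\cap C|\ge a$. A mindset $\mu_i$ induces a tangle if the orientation corresponding to $\mu_i$ is a $\mathcal P$-tangle. Non-degeneracy assumption: whenever $\tau\in\{0,1\}^m$ has the property that for all $x,y,z\in\{1,\dots,m\}$ there exists a mindset $\mu_i$ with $\tau(x)=\mu_i(x)$, $\tau(y)=\mu_i(y)$ and $\tau(z)=\mu_i(z)$, then $\tau=\mu_j$ for some $j$. *)

From HB Require Import structures.
From mathcomp Require Import all_boot all_order all_algebra.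
From mathcomp Require Import reals sequences exp.
Set Implicit Arguments. Unset Strict Implicit. Unset Printing Implicit Defensive.
Import Order.TTheory GRing.Theory Num.Theory.
Local Open Scope ring_scope.

(* Persons are 'I_n, questions are 'I_m, groups are 'I_k.
   An outcome of the random experiment: the answer w (v, s) of person v to question s. *)
Definition answers (n m : nat) := {ffun 'I_n * 'I_m -> bool}.

Definition side (n m : nat) (w : answers n m) (s : 'I_m) (y : bool) : {set 'I_n} :=
  [set v | w (v, s) == y].

Definition is_tangle (n m : nat) (a : nat) (w : answers n m) (tau : 'I_m -> bool) : bool :=
  [forall x, [forall y, [forall z,
     (a <= #|side w x (tau x) :&: side w y (tau y) :&: side w z (tau z)|)%N]]].

Definition weight (R : realType) (n m k : nat) (p : R) (g : 'I_n -> 'I_k)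
    (mu : 'I_k -> {ffun 'I_m -> bool}) (w : answers n m) : R :=
  \prod_(vs : 'I_n * 'I_m) (if w vs == mu (g vs.1) vs.2 then 1 - p else p).

Definition Pr (R : realType) (n m k : nat) (p : R) (g : 'I_n -> 'I_k)
    (mu : 'I_k -> {ffun 'I_m -> bool}) (E : pred (answers n m)) : R :=
  \sum_(w | E w) weight p g mu w.

Definition non_degenerate (m k : nat) (mu : 'I_k -> {ffun 'I_m -> bool}) : Prop :=
  forall tau : {ffun 'I_m -> bool},
    (forall x y z : 'I_m, exists i : 'I_k,
        [/\ tau x = mu i x, tau y = mu i y & tau z = mu i z]) ->
    exists j : 'I_k, tau = mu j.

From HB Require Import structures.
From mathcomp Require Import all_boot all_order all_algebra.
From mathcomp Require Import reals topology normedtype sequences derive realfun exp.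
From mathcomp Require Import ring lra zify.
Set Implicit Arguments. Unset Strict Implicit. Unset Printing Implicit Defensive.
Import Order.TTheory GRing.Theory Num.Theory.
Import numFieldNormedType.Exports.
Local Open Scope ring_scope.

(* Within group i, the number of persons deviating from mu_i on question s is a
   binomial count with n/k trials and parameter p.  Hoeffding's lemma bounds the
   moment generating function of a Bernoulli variable by expR (p x + x^2/8),
   whence the Chernoff-Hoeffding tail bound for this count.  If fewer than
   (n/k - a)/3 persons of each group deviate on each question, every mindset is a
   tangle: a triple intersection of the sides chosen by mu_i contains group i
   minus its deviants on the three questions.  If fewer than a/k persons of each
   group deviate on each question, every tangle tau is a mindset: otherwise, by
   non-degeneracy, some questions x, y, z are matched by no mindset, so every
   person of the triple intersection chosen by tau deviates, within its own
   group, on one of x, y, z, and the intersection has fewer than a persons.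
   A union bound over the k m pairs (i, s) concludes. *)

Section Hoeffding.
Variable R : realType.

Lemma ler_at0_derive_ge0 (f df : R -> R) :
  (forall x, is_derive x (1 : R) f (df x)) -> (forall x, 0 < x -> 0 <= df x) ->
  forall x, 0 <= x -> f 0 <= f x.
Proof.
move=> f_df df_ge0 x x_ge0; apply: (@ger0_derive1_ndecry R f 0) => //.
- move=> y; rewrite in_itv /= andbT => y_gt0.
  by have := f_df y; rewrite derive1E derive_val => _; exact: df_ge0.
- apply: continuous_subspaceT => y; have := f_df y => _.
  exact/differentiable_continuous/derivable1_diffP.
Qed.

Variable p : R.
Hypotheses (p_ge0 : 0 <= p) (p_lt1 : p < 1).

Definition bernoulli_mgf (x : R) : R := 1 - p + p * expR x.

Lemma bernoulli_mgf_gt0 x : 0 < bernoulli_mgf x.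
Proof. by rewrite ltr_wpDr ?mulr_ge0 ?expR_ge0 // subr_gt0. Qed.

Lemma is_derive_bernoulli_mgf x : is_derive x (1 : R) bernoulli_mgf (p * expR x).
Proof. by apply: is_derive_eq; rewrite add0r mul1r. Qed.

(* [F] is the derivative of [x |-> p x + x^2/8 - ln (bernoulli_mgf x)]; both
   vanish at 0, and [F' = (1 - p - p e^x)^2 / (4 bernoulli_mgf x ^ 2) >= 0]. *)
Let F x := p + x / 4 - 1 + (1 - p) * (bernoulli_mgf x)^-1.

Let is_derive_F x :
  is_derive x (1 : R) F (4^-1 - (1 - p) * (p * expR x) / bernoulli_mgf x ^+ 2).
Proof.
have mgf_neq0 := lt0r_neq0 (bernoulli_mgf_gt0 x).
have := is_deriveV mgf_neq0 (is_derive_bernoulli_mgf x) => dV.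
apply: is_derive_eq; rewrite scaler0 !add0r -[4^-1%:A]/(4^-1 * 1) /=.
by rewrite -[(- _ *: _)]/(- bernoulli_mgf x ^- 2 * (p * expR x))
           -[(1 - p) *: _]/((1 - p) * _); field.
Qed.

Let F_ge0 x : 0 <= x -> 0 <= F x.
Proof.
move=> x_ge0.
have <- : F 0 = 0 by rewrite /F /bernoulli_mgf expR0 mulr1 subrK invr1; ring.
apply: (ler_at0_derive_ge0 is_derive_F) x_ge0 => {}x _.
have mgf_neq0 : 1 - p + p * expR x != 0 := lt0r_neq0 (bernoulli_mgf_gt0 x).
have -> : 4^-1 - (1 - p) * (p * expR x) / (1 - p + p * expR x) ^+ 2 =
          (1 - p - p * expR x) ^+ 2 / (4 * (1 - p + p * expR x) ^+ 2) by field.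
by rewrite divr_ge0 ?sqr_ge0 // mulr_ge0 ?sqr_ge0.
Qed.

Lemma hoeffding_lemma x : 0 <= x -> bernoulli_mgf x <= expR (p * x + x ^+ 2 / 8).
Proof.
move=> x_ge0; rewrite -(lnK (bernoulli_mgf_gt0 x)) ler_expR -subr_ge0.
pose G y := p * y + y ^+ 2 / 8 - ln (bernoulli_mgf y).
have is_derive_G y : is_derive y (1 : R) G (F y).
  have dln := is_derive1_comp (is_derive1_ln (bernoulli_mgf_gt0 y))
                              (is_derive_bernoulli_mgf y).
  have mgf_neq0 : 1 - p + p * expR y != 0 := lt0r_neq0 (bernoulli_mgf_gt0 y).
  apply: is_derive_eq; rewrite /F /bernoulli_mgf.
  by rewrite scaler0 add0r -[p%:A]/(p * 1) -[y%:A]/(y * 1)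
             -[8^-1 *: _]/(8^-1 * (y * 1 + y * 1)); field.
have G0 : G 0 = 0 by rewrite /G /bernoulli_mgf expR0 mulr1 subrK ln1; ring.
by have := ler_at0_derive_ge0 is_derive_G (fun y y0 => F_ge0 (ltW y0)) x_ge0;
   rewrite G0.
Qed.

End Hoeffding.

Section Chernoff.
Variables (R : realType) (I : finType) (c : I -> bool) (p : R).

Definition noise_weight (w : {ffun I -> bool}) : R :=
  \prod_x (if w x == c x then 1 - p else p).

Definition flips (S : {set I}) (w : {ffun I -> bool}) : nat :=
  #|[set x in S | w x != c x]|.

Lemma noise_weight_ge0 w : 0 <= p -> p <= 1 -> 0 <= noise_weight w.
Proof.
by move=> p_ge0 p_le1; apply: prodr_ge0 => x _; case: ifP; rewrite ?subr_ge0.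
Qed.

Lemma sum_noise_weight_expR (S : {set I}) (l : R) :
  \sum_w noise_weight w * expR (l * (flips S w)%:R) = bernoulli_mgf p l ^+ #|S|.
Proof.
pose h x (b : bool) : R := (if b == c x then 1 - p else p) *
  (if (x \in S) && (b != c x) then expR l else 1).
have factor w : noise_weight w * expR (l * (flips S w)%:R) = \prod_x h x (w x).
  rewrite big_split /= /flips -sum1_card natr_sum big_mkcond /= mulr_sumr expR_sum.
  congr (_ * _); apply: eq_bigr => x _; rewrite inE.
  by case: ifP => _; rewrite ?mulr1 ?mulr0 ?expR0.
under eq_bigr => w _ do rewrite factor.
rewrite -(bigA_distr_bigA h) (bigID (mem S)) /= mulrC big1 ?mul1r; last first.
  by move=> x /negbTE xNS; rewrite big_bool /h xNS !mulr1; case: (c x) => /=; ring.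
rewrite (eq_bigr (fun=> bernoulli_mgf p l)) ?prodr_const // => x xS.
by rewrite big_bool /h xS /bernoulli_mgf; case: (c x) => /=; rewrite !mulr1; ring.
Qed.

Lemma flips_tail (S : {set I}) (t : R) : 0 <= p -> p < 1 ->
  (0 < #|S|)%N -> #|S|%:R * p <= t ->
  \sum_(w | t <= (flips S w)%:R) noise_weight w
    <= expR (- (2 * (t - #|S|%:R * p) ^+ 2) / #|S|%:R).
Proof.
move=> p_ge0 p_lt1 S_gt0 t_ge; set N : R := #|S|%:R.
have N_gt0 : 0 < N by rewrite ltr0n.
set l := 4 * (t - N * p) / N.
have l_ge0 : 0 <= l by rewrite divr_ge0 ?mulr_ge0 ?subr_ge0 // ltW.
have markov : \sum_(w | t <= (flips S w)%:R) noise_weight w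
    <= \sum_w noise_weight w * expR (l * ((flips S w)%:R - t)).
  rewrite [leLHS]big_mkcond /=; apply: ler_sum => w _.
  have w_ge0 := noise_weight_ge0 w p_ge0 (ltW p_lt1).
  case: ifP => t_le; last by apply: mulr_ge0; rewrite ?expR_ge0.
  rewrite ler_peMr // leNgt expR_lt1 -leNgt.
  by apply: mulr_ge0; rewrite ?subr_ge0.
apply: (le_trans markov).
under eq_bigr => w _ do rewrite mulrBr expRD mulrA.
rewrite -mulr_suml sum_noise_weight_expR mulrC -/N.
apply: (@le_trans _ _ (expR (- (l * t)) * expR (p * l + l ^+ 2 / 8) ^+ #|S|)).
  rewrite ler_pM2l ?expR_gt0 //; apply: lerXn2r; rewrite ?nnegrE ?expR_ge0 //.
    exact/ltW/bernoulli_mgf_gt0.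
  exact: hoeffding_lemma.
rewrite -expRM_natl -expRD ler_expR -/N /l le_eqVlt; apply/orP; left; apply/eqP.
by field; rewrite lt0r_neq0.
Qed.

End Chernoff.

Section Deviants.
Variables (n m k : nat) (g : 'I_n -> 'I_k) (mu : 'I_k -> {ffun 'I_m -> bool}).

Definition deviants (i : 'I_k) (s : 'I_m) (w : answers n m) : {set 'I_n} :=
  [set v | (g v == i) && (w (v, s) != mu i s)].

Lemma tangle_of_few_deviants (a : nat) (w : answers n m) (i : 'I_k) :
  (forall s, 3 * #|deviants i s w| + a <= #|[set v | g v == i]|)%N ->
  is_tangle a w (mu i).
Proof.
move=> few; apply/forallP => x; apply/forallP => y; apply/forallP => z.
set I := _ :&: _ :&: _.
have sub : [set v | g v == i] \subset
    I :|: deviants i x w :|: deviants i y w :|: deviants i z w.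
  apply/subsetP => v; rewrite !inE => /eqP <-; rewrite eqxx /=.
  by case: eqP; case: eqP; case: eqP.
have card_le : (#|[set v | g v == i]|
    <= #|I| + #|deviants i x w| + #|deviants i y w| + #|deviants i z w|)%N.
  apply: (leq_trans (subset_leq_card sub)).
  by do 3 (apply: (leq_trans (leq_card_setU _ _).1); rewrite leq_add2r).
have := few x; have := few y; have := few z; lia.
Qed.

Lemma mindset_of_tangle (a : nat) (w : answers n m) (tau : {ffun 'I_m -> bool}) :
  (0 < k)%N -> non_degenerate mu -> is_tangle a w tau ->
  (forall i s, k * #|deviants i s w| < a)%N -> exists j, tau = mu j.
Proof.
move=> k_gt0 nondeg tangle few; apply: nondeg => x y z.
have [/existsP [i /and3P [/eqP ? /eqP ? /eqP ?]] | /existsPn disagree] :=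
  boolP [exists i, [&& tau x == mu i x, tau y == mu i y & tau z == mu i z]].
  by exists i.
exfalso; pose s_ i := if tau x != mu i x then x else if tau y != mu i y then y else z.
set I := side w x (tau x) :&: side w y (tau y) :&: side w z (tau z).
have s_bad i : tau (s_ i) != mu i (s_ i).
  have := disagree i; rewrite /s_.
  by case: ifPn => // /negPn ->; case: ifPn => // /negPn ->.
have I_dev v : v \in I -> v \in deviants (g v) (s_ (g v)) w.
  rewrite !inE eqxx /= => /andP [/andP [/eqP wx /eqP wy] /eqP wz].
  suff -> : w (v, s_ (g v)) = tau (s_ (g v)) by exact: s_bad.
  by rewrite /s_; case: ifP => _; last case: ifP.
have card_I : (#|I| <= \sum_i #|deviants i (s_ i) w|)%N.
  rewrite -sum1_card (partition_big g predT) //=; apply: leq_sum => i _.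
  rewrite sum1dep_card; apply: subset_leq_card; apply/subsetP => v.
  by rewrite inE => /andP [/I_dev + /eqP gv]; rewrite gv.
have sum_lt : (k * \sum_i #|deviants i (s_ i) w| < k * a)%N.
  rewrite big_distrr /=; apply: (@leq_trans (\sum_(i < k) a.-1).+1).
    by rewrite ltnS; apply: leq_sum => i _; rewrite -ltnS (ltn_predK (few i (s_ i))).
  have a_gt0 : (0 < a)%N := leq_ltn_trans (leq0n _) (few (Ordinal k_gt0) x).
  by rewrite sum_nat_const card_ord ltn_pmul2l // ltn_predL.
have := forallP tangle x => /forallP /(_ y) /forallP /(_ z).
rewrite -/I ltn_pmul2l // in sum_lt *; lia.
Qed.

Variables (R : realType) (p : R).
Hypotheses (p_ge0 : 0 <= p) (p_lt1 : p < 1).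

Lemma Pr_deviants_tail (i : 'I_k) (s : 'I_m) (t : R) :
  (0 < #|[set v | g v == i]|)%N -> #|[set v | g v == i]|%:R * p <= t ->
  Pr p g mu (fun w => t <= #|deviants i s w|%:R)
    <= expR (- (2 * (t - #|[set v | g v == i]|%:R * p) ^+ 2)
             / #|[set v | g v == i]|%:R).
Proof.
pose c : 'I_n * 'I_m -> bool := fun vs => mu (g vs.1) vs.2.
pose S := [set (v, s) | v in [set v | g v == i]].
have pair_inj : injective (fun v : 'I_n => (v, s)) by move=> v1 v2 [].
have flipsE (w : answers n m) :
    [set vs in S | w vs != c vs] = (fun v => (v, s)) @: deviants i s w.
  apply/setP => vs; apply/idP/imsetP.
    rewrite inE => /andP [/imsetP [v + ->]]; rewrite !inE => /eqP gv wv.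
    by exists v; rewrite // inE gv eqxx -gv.
  move=> [v + ->]; rewrite !inE => /andP [/eqP gv wv].
  by rewrite imset_f ?inE /c /= gv.
rewrite -(card_imset _ pair_inj) => S_gt0 t_ge.
rewrite /Pr (eq_bigl (fun w => t <= (flips c S w)%:R)) => [|w]; last first.
  by rewrite /flips flipsE card_imset.
exact: flips_tail.
Qed.

Lemma Pr_union (J : finType) (E : pred (answers n m)) (F : J -> pred (answers n m)) :
  (forall w, E w -> exists j, F j w) -> Pr p g mu E <= \sum_j Pr p g mu (F j).
Proof.
move=> E_sub; rewrite /Pr.
under [leRHS]eq_bigr => j _ do rewrite big_mkcond /=.
rewrite exchange_big /= big_mkcond /=; apply: ler_sum => w _.
have w_ge0 : 0 <= weight p g mu w := noise_weight_ge0 _ _ p_ge0 (ltW p_lt1).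
have F_ge0 j : 0 <= (if F j w then weight p g mu w else 0) by case: ifP.
case: ifP => [Ew | _]; last exact: sumr_ge0.
have [j Fj] := E_sub w Ew.
by rewrite (bigD1 j) //= Fj lerDl sumr_ge0.
Qed.

Lemma Pr_deviants_union_bound (N : nat) (t : R) (E : pred (answers n m)) :
  (forall i, #|[set v | g v == i]| = N) -> (0 < N)%N -> N%:R * p <= t ->
  (forall w, E w -> exists i s, t <= #|deviants i s w|%:R) ->
  Pr p g mu E <= k%:R * m%:R * expR (- (2 * (t - N%:R * p) ^+ 2) / N%:R).
Proof.
move=> card_group N_gt0 t_ge E_dev.
apply: (le_trans (Pr_union (F := fun j w => t <= #|deviants j.1 j.2 w|%:R) _)).
  by move=> w /E_dev [i [s dev]]; exists (i, s).
have -> : k%:R * m%:R = #|{: 'I_k * 'I_m}|%:R :> R.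
  by rewrite card_prod !card_ord natrM.
rewrite mulr_natl -sumr_const.
by apply: ler_sum => -[i s] _; have := @Pr_deviants_tail i s; rewrite card_group; apply.
Qed.

End Deviants.

Unset Implicit Arguments.
Set Strict Implicit.

Theorem theorem1 (R : realType) (n m k : nat) (p : R) (a : nat)
    (g : 'I_n -> 'I_k) (mu : 'I_k -> {ffun 'I_m -> bool}) :
  (0 < n)%N -> (0 < m)%N -> (0 < k)%N -> (k %| n)%N ->
  (forall i : 'I_k, #|[set v | g v == i]| = n %/ k)%N ->
  0 < p -> p < 1 / 2 -> p < 1 / (k%:R + 3) ->
  p * n%:R < a%:R -> a%:R < (1 - 3 * p) * n%:R / k%:R ->
  Pr p g mu (fun w => [exists i : 'I_k, ~~ is_tangle a w (mu i)])
    <= k%:R * m%:R *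
       expR (- (2 * n%:R * (k%:R * a%:R / n%:R - 1 + 3 * p) ^+ 2) / (9 * k%:R))
  /\
  (non_degenerate mu ->
   Pr p g mu (fun w => [exists tau : {ffun 'I_m -> bool},
                          is_tangle a w tau && [forall i : 'I_k, tau != mu i]])
     <= k%:R * m%:R * expR (- (2 * n%:R * (a%:R / n%:R - p) ^+ 2) / k%:R)).
Proof.
move=> n_gt0 _ k_gt0 k_dvd_n card_group p_gt0 p_lt_half _ pn_lt_a a_lt.
have p_ge0 := ltW p_gt0; have p_lt1 : p < 1 by lra.
set N := (n %/ k)%N in card_group.
have N_gt0 : (0 < N)%N by rewrite divn_gt0 // dvdn_leq.
have NE : N%:R = n%:R / k%:R :> R by rewrite natf_div.
have n_neq0 : n%:R != 0 :> R by rewrite pnatr_eq0 -lt0n.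
have k_neq0 : k%:R != 0 :> R by rewrite pnatr_eq0 -lt0n.
have k_gt0R : 0 < k%:R :> R by rewrite ltr0n.
split=> [|nondeg].
- have -> : - (2 * n%:R * (k%:R * a%:R / n%:R - 1 + 3 * p) ^+ 2) / (9 * k%:R)
      = - (2 * ((N%:R - a%:R) / 3 - N%:R * p) ^+ 2) / N%:R :> R.
    by rewrite NE; field; apply/andP.
  apply: (Pr_deviants_union_bound p_ge0 p_lt1 card_group N_gt0).
    by move: a_lt; rewrite NE -mulrA ler_pdivlMr // => ?; lra.
  move=> w /existsP [i not_tangle].
  have [s many] : exists s, (N < 3 * #|deviants g mu i s w| + a)%N.
    apply/existsP; apply: contraR not_tangle => /existsPn few.
    by apply: (tangle_of_few_deviants (g := g)) => s; rewrite card_group leqNgt few.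
  exists i, s; move: many; rewrite -(ltr_nat R) natrD natrM => ?; lra.
- have -> : - (2 * n%:R * (a%:R / n%:R - p) ^+ 2) / k%:R
      = - (2 * (a%:R / k%:R - N%:R * p) ^+ 2) / N%:R :> R.
    by rewrite NE; field; apply/andP.
  apply: (Pr_deviants_union_bound p_ge0 p_lt1 card_group N_gt0).
    by rewrite NE mulrAC ler_pM2r ?invr_gt0 // mulrC ltW.
  move=> w /existsP [tau /andP [tangle /forallP tau_new]].
  have [i [s many]] : exists i s, (a <= k * #|deviants g mu i s w|)%N.
    have [/existsP [i /existsP [s many]] | /existsPn few] :=
      boolP [exists i, exists s, a <= k * #|deviants g mu i s w|]%N.
      by exists i, s.
    have [|j tau_j] := mindset_of_tangle k_gt0 nondeg tangle (g := g).
      by move=> i s; move/existsPn: (few i) => /(_ s); rewrite -ltnNge.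
    by have := tau_new j; rewrite tau_j eqxx.
  exists i, s; move: many; rewrite -(ler_nat R) natrM => ?.
  by rewrite ler_pdivrMr // mulrC.
Qed.
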